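(* Under the hypotheses of the previous setting — $k\ge 2$, $\mathcal H$ a 3-uniform linear hypergraph with no Berge cycle of length $2k+1$, $\pi$ a choice function on $\mathcal H$, $G_\pi$ the graph with edge set $\{\pi(E):E\in\mathcal H,\ \pi(E)\neq\emptyset\}$, $T$ a subtree of $G_\pi$, $x\in V(T)$, $V_i$ the set of vertices of $T$ at distance exactly $i$ from $x$ in $T$, and $G_i=G_\pi[V_i]$ — we have \[ e(G_i)\le (2k-2)|V_i| \quad\text{for all } 1\le i\le k. \]
   Context: A hypergraph is linear if any two distinct hyperedges share at most one vertex. A Berge cycle of length $m$ is a family of $m$ distinct hyperedges $H_0,\dots,H_{m-1}$ for which there exist distinct vertices $v_0,\dots,v_{m-1}$ with $\{v_i,v_{i+1}\}\subset H_i$ (indices mod $m$). A choice function on $\mathcal H$ is a map $\pi$ assigning to each hyperedge $E$ either a 2-element subset $\pi(E)\subset E$ or $\emptyset$. $e(G)$ is the number of edges of $G$. *)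

(* Hypergraphs on a finite vertex type V are sets of vertex
   sets; simple graphs are sets of 2-element vertex sets. *)
From mathcomp Require Import all_boot.
Set Implicit Arguments. Unset Strict Implicit. Unset Printing Implicit Defensive.

Section Hyper.
Variable V : finType.

Definition uniform3 (H : {set {set V}}) : Prop :=
  forall E, E \in H -> #|E| = 3.

Definition linear_hg (H : {set {set V}}) : Prop :=
  forall E F, E \in H -> F \in H -> E != F -> #|E :&: F| <= 1.

Definition berge_cycle (H : {set {set V}}) (m : nat) : Prop :=
  exists (hs : nat -> {set V}) (vs : nat -> V),
    (forall i, i < m -> hs i \in H) /\
    (forall i j, i < m -> j < m -> i != j -> hs i != hs j) /\
    (forall i j, i < m -> j < m -> i != j -> vs i != vs j) /\
    (forall i, i < m -> [set vs i; vs ((i + 1) %% m)] \subset hs i).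

Definition choice_fun (H : {set {set V}}) (pi : {set V} -> {set V}) : Prop :=
  forall E, E \in H -> pi E \subset E /\ (#|pi E| = 2 \/ pi E = set0).

Definition Gpi (H : {set {set V}}) (pi : {set V} -> {set V}) : {set {set V}} :=
  [set pi E | E in H & pi E != set0].

Definition adj (Ed : {set {set V}}) : rel V := fun a b => [set a; b] \in Ed.

Definition walk (Ed : {set {set V}}) (u v : V) (n : nat) : Prop :=
  exists s : seq V, size s = n /\ path (adj Ed) u s /\ last u s = v.

Definition is_tree (VT : {set V}) (ET : {set {set V}}) : Prop :=
  (forall e, e \in ET -> #|e| = 2 /\ e \subset VT) /\
  (forall u v, u \in VT -> v \in VT -> exists n, walk ET u v n) /\
  (forall c : seq V, uniq c -> 3 <= size c -> ~ cycle (adj ET) c).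

Definition subtree (Ed : {set {set V}}) (VT : {set V}) (ET : {set {set V}}) : Prop :=
  ET \subset Ed /\ is_tree VT ET.

Definition dist_eq (ET : {set {set V}}) (x v : V) (i : nat) : Prop :=
  walk ET x v i /\ forall j, j < i -> ~ walk ET x v j.

Definition e_induced (Ed : {set {set V}}) (S : {set V}) : nat :=
  #|[set e in Ed | e \subset S]|.

End Hyper.

From Stdlib Require Import ZArith Lia Classical ClassicalEpsilon.
From mathcomp Require Import all_boot zify.

(* If e(G_i) > (2k-2)|V_i|, some nonempty S of V_i induces a subgraph of G_pi of
   minimum degree at least 2k-1. The end h of a maximal path in it has all its
   neighbours on the path: the farthest one closes a cycle C of length n >= 2k,
   and any other neighbour not next to h on the path gives a chord of C at h.
   Let t be the last level at which all vertices of C have a common ancestor in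
   T, and colour C by the ancestor at level t + 1. In a cycle with a chord, a
   non-constant colouring has, for every odd l < n, a path of length l with
   differently coloured ends; for l = 2(k - i + t) + 1 such a path, closed up
   through the two ancestor chains (disjoint above level t), is a cycle of
   length 2k + 1 in G_pi. Its edges are images of distinct hyperedges, so it is
   a Berge cycle of length 2k + 1.
   For the colouring fact, read the colouring as an n-periodic function on Z:
   paths along C make it l-periodic, hence periodic with odd period gcd(l, n),
   and paths through the chord make it 2-periodic, hence constant. *)

Set Implicit Arguments. Unset Strict Implicit. Unset Printing Implicit Defensive.

Section PeriodicFunctions.
Local Open Scope Z_scope.

Definition periodic (F : Z -> bool) (p : Z) : Prop := forall x, F (x + p) = F x.

Variable F : Z -> bool.

Lemma periodicN p : periodic F p -> forall x, F (x - p) = F x.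
Proof. by move=> Fp x; rewrite -{2}(Z.sub_add p x) Fp. Qed.

Lemma periodicD p q : periodic F p -> periodic F q -> periodic F (p + q).
Proof. by move=> Fp Fq x; rewrite Z.add_assoc Fq Fp. Qed.

Lemma periodicM p m : periodic F p -> periodic F (m * p).
Proof.
move=> Fp.
have Fnat (j : nat) : periodic F (Z.of_nat j * p).
  elim: j => [|j IH] x; first by rewrite Z.add_0_r.
  by rewrite Nat2Z.inj_succ Z.mul_succ_l Z.add_assoc Fp IH.
case: (Z_le_gt_dec 0 m) => [m_ge0|m_lt0] x.
  by rewrite -(Z2Nat.id m m_ge0) Fnat.
rewrite -(Fnat (Z.to_nat (- m)) (x + m * p)) Z2Nat.id; [congr F|]; lia.
Qed.

Lemma periodic_gcd p q : periodic F p -> periodic F q -> periodic F (Z.gcd p q).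
Proof.
move=> Fp Fq; have [u [v <-]] := Z.gcd_bezout p q _ erefl.
by apply: periodicD; apply: periodicM.
Qed.

Lemma periodic_odd_constant g : Z.odd g = true -> periodic F g -> periodic F 2 ->
  forall x, F x = F 0.
Proof.
move=> g_odd Fg F2.
have F1 : periodic F 1.
  have [m g_eq] := proj1 (Z.odd_spec g) g_odd.
  by move=> x; rewrite -[RHS](periodicM (m + 1) F2 x) -(Fg (x + 1)); congr F; lia.
by move=> x; rewrite -(periodicM x F1 0) Z.mul_1_r Z.add_0_l.
Qed.

End PeriodicFunctions.

Section PeriodicWindow.
Local Open Scope Z_scope.
Variables (F : Z -> bool) (d L : Z).
Hypotheses (d_gt0 : 0 < d) (Fd : periodic F d).

Lemma periodic_eq_on_window (G : Z -> bool) : periodic G d ->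
  (forall x, L <= x < L + d -> F x = G x) -> forall x, F x = G x.
Proof.
move=> Gd FG x.
have -> : x = (L + (x - L) mod d) + ((x - L) / d) * d.
  have := Z.div_mod (x - L) d; lia.
have := Z.mod_pos_bound (x - L) d d_gt0.
by rewrite !periodicM // => x_bd; apply: FG; lia.
Qed.

Lemma periodic_shift c :
  (forall y, L <= y < L + d -> F y = F (y + c)) -> periodic F c.
Proof.
move=> Fc y; symmetry; move: y.
apply: (periodic_eq_on_window (G := fun y => F (y + c))) => // y.
by rewrite -Z.add_assoc (Z.add_comm d) Z.add_assoc Fd.
Qed.

Lemma periodic_reflect c :
  (forall y, L <= y < L + d -> F y = F (c - y)) -> forall y, F y = F (c - y).
Proof.
move=> Fc; apply: (periodic_eq_on_window (G := fun y => F (c - y))) => // y.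
by rewrite Z.sub_add_distr periodicN.
Qed.

End PeriodicWindow.

Section ChordedCycleColouring.
Local Open Scope Z_scope.
Variables (F : Z -> bool) (n s l : Z).
Hypotheses (s_bd : 2 <= s <= n - 2) (l_bd : 1 <= l < n) (l_odd : Z.odd l = true).
Hypothesis Fn : periodic F n.
(* The ends of every path of length [l] in the cycle [0 .. n - 1] with chord [{0, s}]
   have the same colour: [F_arc] for the paths along the cycle, the other four for the
   paths through the chord. *)
Hypothesis F_arc : forall p, 0 <= p < n -> F p = F (p + l).
Hypothesis F_chord_up_down : forall a, 0 <= a <= l - 1 -> a <= n - s - 1 -> l - s <= a ->
  F (- a) = F (s - l + 1 + a).
Hypothesis F_chord_down_up : forall a, 0 <= a <= l - 1 -> a <= s - 1 -> l + s - n <= a ->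
  F a = F (s + l - 1 - a).
Hypothesis F_chord_up_up : l <= n - s -> forall a, 0 <= a <= l - 1 ->
  F (- a) = F (s + l - 1 - a).
Hypothesis F_chord_down_down : l <= s -> forall a, 0 <= a <= l - 1 ->
  F a = F (s - l + 1 + a).

Let g := Z.gcd l n.

Lemma colouring_periodic_l : periodic F l.
Proof.
have n_gt0 : 0 < n by lia.
by apply: (periodic_shift (L := 0) n_gt0 Fn) => y y_bd; apply: F_arc; lia.
Qed.

Lemma gcd_ln_gt0 : 0 < g.
Proof.
have g_ne0 : g <> 0 by move/Z.gcd_eq_0; lia.
by have := Z.gcd_nonneg l n; rewrite -/g; lia.
Qed.

Lemma colouring_periodic_gcd : periodic F g.
Proof. exact: periodic_gcd colouring_periodic_l Fn. Qed.

Lemma gcd_ln_odd : Z.odd g = true.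
Proof.
have [q l_eq] := Z.gcd_divide_l l n.
by move: l_odd; rewrite l_eq Z.odd_mul; case: (Z.odd g); rewrite ?andbF.
Qed.

Lemma gcd_ln_le : g <= l /\ g <= n - l.
Proof.
have := gcd_ln_gt0; split; apply: Z.divide_pos_le; try lia.
  exact: Z.gcd_divide_l.
by apply: Z.divide_sub_r; [exact: Z.gcd_divide_r | exact: Z.gcd_divide_l].
Qed.

Lemma colouring_shift_pred : l <= n - s -> periodic F (s - 1).
Proof.
move=> l_le; have [g_le _] := gcd_ln_le.
apply: (periodic_shift (L := 1 - l) gcd_ln_gt0 colouring_periodic_gcd) => y y_bd.
have -> : y + (s - 1) = s + l - 1 - - y - l by lia.
rewrite (periodicN colouring_periodic_l) -F_chord_up_up ?Z.opp_involutive //; lia.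
Qed.

Lemma colouring_shift_succ : l <= s -> periodic F (s + 1).
Proof.
move=> l_le; have [g_le _] := gcd_ln_le.
apply: (periodic_shift (L := 0) gcd_ln_gt0 colouring_periodic_gcd) => y y_bd.
have -> : y + (s + 1) = s - l + 1 + y + l by lia.
rewrite colouring_periodic_l -F_chord_down_down //; lia.
Qed.

Lemma colouring_reflect_succ d : 0 < d -> periodic F d ->
  d <= Z.min (l - 1) (n - s - 1) - Z.max 0 (l - s) + 1 ->
  forall y, F y = F (s + 1 - y).
Proof.
move=> d_gt0 Fd d_le.
apply: (periodic_reflect (L := - Z.min (l - 1) (n - s - 1)) d_gt0 Fd) => y y_bd.
have -> : s + 1 - y = s - l + 1 + - y + l by lia.
rewrite colouring_periodic_l -F_chord_up_down ?Z.opp_involutive //; lia.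
Qed.

Lemma colouring_reflect_pred d : 0 < d -> periodic F d ->
  d <= Z.min (l - 1) (s - 1) - Z.max 0 (l + s - n) + 1 ->
  forall y, F y = F (s - 1 - y).
Proof.
move=> d_gt0 Fd d_le.
apply: (periodic_reflect (L := Z.max 0 (l + s - n)) d_gt0 Fd) => y y_bd.
have -> : s - 1 - y = s + l - 1 - y - l by lia.
rewrite (periodicN colouring_periodic_l) -F_chord_down_up //; lia.
Qed.

(** Two translations by [s - 1] and [s + 1], or two reflections about
    [(s - 1) / 2] and [(s + 1) / 2], compose to a translation by [2]. *)
Lemma colouring_periodic2 : periodic F 2.
Proof.
have [g_le_l g_le_nl] := gcd_ln_le; have g_gt0 := gcd_ln_gt0.
have by_shifts : periodic F (s - 1) -> periodic F (s + 1) -> periodic F 2.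
  by move=> Fm Fp x; rewrite -(Fp x) -(Fm (x + 2)); congr F; lia.
have by_reflections : (forall y, F y = F (s + 1 - y)) -> (forall y, F y = F (s - 1 - y)) ->
    periodic F 2.
  by move=> Rp Rm x; rewrite Rp (Rm x); congr F; lia.
case: (Z_le_gt_dec l s) => l_s; case: (Z_le_gt_dec l (n - s)) => l_ns.
- exact: by_shifts (colouring_shift_pred l_ns) (colouring_shift_succ l_s).
- have Fns : periodic F (n - s - 1).
    have -> : n - s - 1 = n + (-1) * (s + 1) by lia.
    exact: periodicD Fn (periodicM _ (colouring_shift_succ l_s)).
  by apply: by_reflections;
    [apply: (colouring_reflect_succ _ Fns) | apply: (colouring_reflect_pred _ Fns)]; lia.
- have Fs := colouring_shift_pred l_ns.
  by apply: by_reflections;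
    [apply: (colouring_reflect_succ _ Fs) | apply: (colouring_reflect_pred _ Fs)]; lia.
- have Fg := colouring_periodic_gcd.
  by apply: by_reflections;
    [apply: (colouring_reflect_succ _ Fg) | apply: (colouring_reflect_pred _ Fg)]; lia.
Qed.

Lemma chorded_colouringZ_constant x : F x = F 0.
Proof. exact: periodic_odd_constant gcd_ln_odd colouring_periodic_gcd colouring_periodic2 x. Qed.

End ChordedCycleColouring.

Definition chorded_adj (n s p q : nat) : Prop :=
  q = p.+1 \/ p = q.+1 \/ (p = n - 1 /\ q = 0) \/ (q = n - 1 /\ p = 0) \/
  (p = 0 /\ q = s) \/ (p = s /\ q = 0).

Definition chorded_path (n s l : nat) (g : nat -> nat) : Prop :=
  [/\ forall j, j <= l -> g j < n,
      forall j1 j2, j1 <= l -> j2 <= l -> g j1 = g j2 -> j1 = j2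
    & forall j, j < l -> chorded_adj n s (g j) (g j.+1)].

(** [chord_walk n s a up1 up2] walks [a] steps along the cycle into vertex [0]
    (upwards from [n - a] if [up1], downwards from [a] otherwise), crosses the
    chord to [s] and goes on along the cycle, upwards if [up2], downwards otherwise. *)
Definition chord_walk (n s a : nat) (up1 up2 : bool) (j : nat) : nat :=
  if j < a then (if up1 then n - a + j else a - j)
  else if j == a then 0 else (if up2 then s + (j - a - 1) else s - (j - a - 1)).

Ltac solve_chorded_path :=
  split;
  [ move=> j ?; repeat case: ifP; lia
  | move=> j1 j2 ? ?; repeat case: ifP; lia
  | move=> j ?; rewrite /chorded_adj; repeat case: ifP => ?;
    first [ by left; lia | by right; left; lia | by do 2 right; left; lia
          | by do 3 right; left; lia | by do 4 right; left; lia | by do 5 right; lia ] ].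

Lemma arc_chorded_path n s l p : 1 <= l < n -> p < n ->
  chorded_path n s l (fun j => if p + j < n then p + j else p + j - n).
Proof. move=> *; solve_chorded_path. Qed.

Lemma chord_walk_path_up_down n s l a : 2 <= s -> s + 2 <= n -> 1 <= l < n ->
  a <= l - 1 -> a <= n - s - 1 -> l - 1 - a <= s - 1 ->
  chorded_path n s l (chord_walk n s a true false).
Proof. rewrite /chord_walk => *; solve_chorded_path. Qed.

Lemma chord_walk_path_down_up n s l a : 2 <= s -> s + 2 <= n -> 1 <= l < n ->
  a <= l - 1 -> a <= s - 1 -> s + (l - 1 - a) <= n - 1 ->
  chorded_path n s l (chord_walk n s a false true).
Proof. rewrite /chord_walk => *; solve_chorded_path. Qed.

Lemma chord_walk_path_up_up n s l a : 2 <= s -> s + 2 <= n -> 1 <= l < n ->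
  a <= l - 1 -> l <= n - s ->
  chorded_path n s l (chord_walk n s a true true).
Proof. rewrite /chord_walk => *; solve_chorded_path. Qed.

Lemma chord_walk_path_down_down n s l a : 2 <= s -> s + 2 <= n -> 1 <= l < n ->
  a <= l - 1 -> l <= s ->
  chorded_path n s l (chord_walk n s a false false).
Proof. rewrite /chord_walk => *; solve_chorded_path. Qed.

Lemma odd_Z_of_nat m : odd m -> Z.odd (Z.of_nat m) = true.
Proof.
move=> m_odd; have m_eq := odd_double_half m; rewrite m_odd in m_eq.
have -> : Z.of_nat m = (2 * Z.of_nat m./2 + 1)%Z by rewrite -m_eq -muln2; lia.
exact: Z.odd_odd.
Qed.

Section ChordedPathColourChange.
Variables (n s l : nat) (col : nat -> bool).
Hypotheses (s_ge2 : 2 <= s) (s_le : s + 2 <= n) (l_bd : 1 <= l < n) (l_odd : odd l).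
Hypothesis no_change : forall g, chorded_path n s l g -> col (g 0) = col (g l).

Let F (x : Z) := col (Z.to_nat (x mod Z.of_nat n)).

Lemma colourZ_residue x r : r < n -> (exists q, x = Z.of_nat n * q + Z.of_nat r)%Z -> F x = col r.
Proof.
move=> r_lt [q ->]; rewrite /F -(Z.mod_unique_pos _ (Z.of_nat n) q (Z.of_nat r)) //; last lia.
by rewrite Nat2Z.id.
Qed.

Lemma colourZ_path_ends g X Y : chorded_path n s l g ->
  (exists q, X = Z.of_nat n * q + Z.of_nat (g 0%N))%Z ->
  (exists q, Y = Z.of_nat n * q + Z.of_nat (g l))%Z -> F X = F Y.
Proof.
move=> g_path X_eq Y_eq; have [g_lt _ _] := g_path.
by rewrite (colourZ_residue (g_lt 0 _) X_eq) // (colourZ_residue (g_lt l _) Y_eq) // no_change.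
Qed.

Ltac solve_residue :=
  rewrite /chord_walk /=; repeat case: ifP => ?;
  first [ exists 0%Z; lia | exists 1%Z; lia | exists (-1)%Z; lia ].

Lemma chorded_colour_constant p : p < n -> col p = col 0.
Proof.
move=> p_lt; have n_gt0 : 0 < n by lia.
rewrite -(colourZ_residue (x := Z.of_nat p) p_lt) -?(colourZ_residue (x := 0%Z) n_gt0);
  try by exists 0%Z; lia.
apply: (chorded_colouringZ_constant (n := Z.of_nat n) (s := Z.of_nat s) (l := Z.of_nat l)).
- lia.
- lia.
- exact: odd_Z_of_nat.
- move=> x; rewrite /F; congr col; congr Z.to_nat.
  by rewrite -{1}(Z.mul_1_l (Z.of_nat n)) Z.mod_add //; lia.
- move=> a a_bd; have a_lt : Z.to_nat a < n by lia.
  apply: (colourZ_path_ends (arc_chorded_path s l_bd a_lt));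
    case: ifP => ?; first [exists 0%Z; lia | exists 1%Z; lia].
- move=> a *; apply: (colourZ_path_ends
    (chord_walk_path_up_down (a := Z.to_nat a) s_ge2 s_le l_bd _ _ _)); try lia; solve_residue.
- move=> a *; apply: (colourZ_path_ends
    (chord_walk_path_down_up (a := Z.to_nat a) s_ge2 s_le l_bd _ _ _)); try lia; solve_residue.
- move=> l_le a *; apply: (colourZ_path_ends
    (chord_walk_path_up_up (a := Z.to_nat a) s_ge2 s_le l_bd _ _)); try lia; solve_residue.
- move=> l_le a *; apply: (colourZ_path_ends
    (chord_walk_path_down_down (a := Z.to_nat a) s_ge2 s_le l_bd _ _)); try lia; solve_residue.
Qed.

End ChordedPathColourChange.

Lemma chorded_path_colour_change n s l (col : nat -> bool) :
  2 <= s -> s + 2 <= n -> 1 <= l < n -> odd l ->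
  (exists2 p, p < n & col p != col 0) ->
  exists2 g, chorded_path n s l g & col (g 0) != col (g l).
Proof.
move=> s_ge2 s_le l_bd l_odd [p p_lt col_p]; apply: NNPP => no_change.
move/eqP: col_p; apply.
apply: (chorded_colour_constant (col := col) s_ge2 s_le l_bd l_odd _ p_lt) => g g_path.
by apply/eqP; apply: contraT => col_g; case: no_change; exists g.
Qed.

Lemma set2C (T : finType) (a b : T) : [set a; b] = [set b; a].
Proof. by rewrite setUC. Qed.

Definition cycle_in (V : finType) (Ed : {set {set V}}) (m : nat) (phi : nat -> V) : Prop :=
  (forall a b, a < m -> b < m -> phi a = phi b -> a = b) /\
  (forall a, a < m -> [set phi a; phi ((a + 1) %% m)] \in Ed).

Definition chorded_cycle_in (V : finType) (Ed : {set {set V}}) (n s : nat) (cyc : nat -> V) : Prop :=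
  (forall a b, a < n -> b < n -> cyc a = cyc b -> a = b) /\
  (forall p q, p < n -> q < n -> chorded_adj n s p q -> [set cyc p; cyc q] \in Ed).

Lemma modS_small a m : a < m -> (a + 1) %% m = if a + 1 < m then a + 1 else 0.
Proof.
move=> a_lt; case: ifP => a1_lt; first by rewrite modn_small.
by rewrite (_ : a + 1 = m) ?modnn //; lia.
Qed.

Lemma exists_switch (P : nat -> bool) n : P 0 -> ~~ P n ->
  exists2 t, t < n & P t && ~~ P t.+1.
Proof.
move=> P0; elim: n => [|n IH] Pn; first by rewrite P0 in Pn.
case: (boolP (P n)) => [Pn' | /IH [t t_lt Pt]]; first by exists n; rewrite ?Pn'.
by exists t => //; exact: ltnW.
Qed.

Section TreeLevels.
Variables (V : finType) (ET : {set {set V}}) (VT : {set V}) (x : V).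
Hypothesis ET_sub : forall e, e \in ET -> e \subset VT.

Definition at_level (v : V) (t : nat) : Prop := v \in VT /\ dist_eq ET x v t.

Lemma walk_rcons u v t : walk ET x u t -> [set u; v] \in ET -> walk ET x v t.+1.
Proof.
case=> w [w_size [w_path w_last]] uv; exists (rcons w v).
by rewrite size_rcons w_size rcons_path w_path w_last /= last_rcons /adj uv.
Qed.

Lemma walk_rconsP v t : walk ET x v t.+1 -> exists2 u, walk ET x u t & [set u; v] \in ET.
Proof.
case=> w []; case/lastP: w => [//|w z].
rewrite size_rcons rcons_path last_rcons => -[w_size] [/andP [w_path wz] <-].
by exists (last x w) => //; exists w.
Qed.

Lemma at_level_inj v t1 t2 : at_level v t1 -> at_level v t2 -> t1 = t2.
Proof.
move=> [_ [w1 min1]] [_ [w2 min2]].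
by case: (ltngtP t1 t2) => // lt; [case: (min2 _ lt w1) | case: (min1 _ lt w2)].
Qed.

Lemma at_level0 v : at_level v 0 -> v = x.
Proof. by move=> [_ [[w [w_size [_ <-]]] _]]; case: w w_size. Qed.

Lemma at_level_parent v t : at_level v t.+1 -> exists2 u, at_level u t & [set u; v] \in ET.
Proof.
move=> [v_in [w minw]]; case: (walk_rconsP w) => u wu uv.
exists u => //; split; first by apply: (subsetP (ET_sub uv)); rewrite !inE eqxx.
by split=> // j j_lt wj; apply: (minw j.+1) => //; exact: walk_rcons wj uv.
Qed.

Definition parent (v : V) : V :=
  epsilon (inhabits x) (fun u => exists t, [/\ at_level v t.+1, at_level u t & [set u; v] \in ET]).

Lemma parentP v t : at_level v t.+1 -> at_level (parent v) t /\ [set parent v; v] \in ET.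
Proof.
move=> vt; have [u ut uv] := at_level_parent vt.
have /(epsilon_spec (inhabits x)) : exists u t, [/\ at_level v t.+1, at_level u t & [set u; v] \in ET].
  by exists u, t.
rewrite -/(parent v) => -[t' [vt' pt' pv]].
have [<-] : t'.+1 = t.+1 by apply: at_level_inj vt' vt.
by [].
Qed.

Variable i : nat.

Definition ancestor (v : V) (t : nat) : V := iter (i - t) parent v.

Lemma ancestor_id v : ancestor v i = v.
Proof. by rewrite /ancestor subnn. Qed.

Lemma ancestorS v t : t < i -> ancestor v t = parent (ancestor v t.+1).
Proof. by move=> t_lt; rewrite /ancestor -iterS; congr iter; lia. Qed.

Lemma ancestor_at_level v t : at_level v i -> t <= i -> at_level (ancestor v t) t.
Proof.
move=> vi; move Hd: (i - t) => d; elim: d t Hd => [|d IH] t Hd t_le.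
  by rewrite (_ : t = i) ?ancestor_id //; lia.
by rewrite ancestorS; [apply: (parentP _).1; apply: IH|]; lia.
Qed.

Lemma ancestor_edge v t : at_level v i -> t < i -> [set ancestor v t; ancestor v t.+1] \in ET.
Proof. by move=> vi t_lt; rewrite ancestorS //; apply: (parentP _).2; exact: ancestor_at_level. Qed.

Lemma ancestor0 v : at_level v i -> ancestor v 0 = x.
Proof. by move=> vi; apply: at_level0; exact: ancestor_at_level. Qed.

Lemma ancestor_eq_le u v t L : t <= L <= i ->
  ancestor u L = ancestor v L -> ancestor u t = ancestor v t.
Proof.
move=> /andP [t_le L_le] eqL.
have anc_iter w : ancestor w t = iter (L - t) parent (ancestor w L).
  by rewrite /ancestor -iterD; congr iter; lia.
by rewrite !anc_iter eqL.
Qed.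

Variable Ed : {set {set V}}.
Hypothesis ET_Ed : ET \subset Ed.

Section SeparatedAncestors.
Variables (p : nat -> V) (l t : nat).
Hypothesis p_level : forall j, j <= l -> at_level (p j) i.
Hypothesis p_inj : forall j1 j2, j1 <= l -> j2 <= l -> p j1 = p j2 -> j1 = j2.
Hypothesis p_adj : forall j, j < l -> [set p j; p j.+1] \in Ed.
Hypothesis anc_meet : ancestor (p 0) t = ancestor (p l) t.
Hypothesis anc_split : ancestor (p 0) t.+1 != ancestor (p l) t.+1.
Hypothesis t_lt : t < i.

Let u := p 0.
Let w := p l.
Let m := 2 * (i - t) + l.

(** Climb from the common ancestor at level [t] up to [u], follow [p] to [w],
    and descend back through the ancestors of [w]. *)
Let phi r := if r < i - t then ancestor u (t + r)
  else if r <= i - t + l then p (r - (i - t)) else ancestor w (i - (r - (i - t + l))).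

Let lev r := if r < i - t then t + r else if r <= i - t + l then i else i - (r - (i - t + l)).

Let u_level : at_level u i := p_level (leq0n l).
Let w_level : at_level w i := p_level (leqnn l).

Lemma ancestor_loop_level r : r < m -> at_level (phi r) (lev r).
Proof.
move=> r_lt; rewrite /phi /lev; case: ifP => r1; [|case: ifP => r2].
- by apply: ancestor_at_level u_level _; lia.
- by apply: p_level; lia.
- by apply: ancestor_at_level w_level _; lia.
Qed.

Lemma ancestors_apart L : t < L <= i -> ancestor u L <> ancestor w L.
Proof.
move=> L_bd eqL; move/eqP: anc_split; apply.
by apply: (ancestor_eq_le (L := L)) => //; lia.
Qed.

Lemma ancestor_loop_inj a b : a < m -> b < m -> phi a = phi b -> a = b.
Proof.
move=> a_lt b_lt phi_ab.
have lev_ab : lev a = lev b.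
  by apply: (at_level_inj (ancestor_loop_level a_lt)); rewrite phi_ab; apply: ancestor_loop_level.
move: phi_ab lev_ab; rewrite /phi /lev.
case: ifP => a1; [|case: ifP => a2]; case: ifP => b1; try case: ifP => b2; move=> phi_ab lev_ab; try lia.
- by case: (ancestors_apart (L := t + a)); [lia | rewrite phi_ab; congr ancestor; lia].
- by have := p_inj _ _ phi_ab; lia.
- by case: (ancestors_apart (L := t + b)); [lia | rewrite -phi_ab; congr ancestor; lia].
Qed.

Lemma ancestor_loop_adj a : a < m -> [set phi a; phi ((a + 1) %% m)] \in Ed.
Proof.
have anc_Ed v L : at_level v i -> L < i -> [set ancestor v L; ancestor v L.+1] \in Ed.
  by move=> vi L_lt; apply: (subsetP ET_Ed); exact: ancestor_edge.
move=> a_lt; rewrite (modS_small a_lt); case: ifP => a1_lt; rewrite /phi.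
- case: ifP => r1; [|case: ifP => r2]; case: ifP => r3; try case: ifP => r4; try (exfalso; lia).
  + by rewrite (_ : t + (a + 1) = (t + a).+1); [apply: anc_Ed u_level _|]; lia.
  + have -> : a + 1 - (i - t) = 0 by lia.
    have := anc_Ed u (t + a) u_level ltac:(lia).
    by rewrite (_ : (t + a).+1 = i) ?ancestor_id //; lia.
  + by rewrite (_ : a + 1 - (i - t) = (a - (i - t)).+1); [apply: p_adj|]; lia.
  + have -> : a - (i - t) = l by lia.
    have -> : i - (a + 1 - (i - t + l)) = i.-1 by lia.
    have := anc_Ed w i.-1 w_level ltac:(lia).
    by rewrite (_ : i.-1.+1 = i) ?ancestor_id 1?set2C //; lia.
  + have -> : i - (a - (i - t + l)) = (i - (a + 1 - (i - t + l))).+1 by lia.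
    by rewrite set2C; apply: anc_Ed w_level _; lia.
- have -> : (0 < i - t) = true by lia.
  rewrite addn0 anc_meet; case: ifP => r1; first lia.
  case: ifP => r2.
  + have -> : a - (i - t) = l by lia.
    have := anc_Ed w t w_level t_lt.
    by rewrite (_ : t.+1 = i) ?ancestor_id 1?set2C //; lia.
  + have -> : i - (a - (i - t + l)) = t.+1 by lia.
    by rewrite set2C; apply: anc_Ed w_level _.
Qed.

Lemma cycle_of_separated_ancestors : exists phi, cycle_in Ed (2 * (i - t) + l) phi.
Proof. by exists phi; split; [exact: ancestor_loop_inj | exact: ancestor_loop_adj]. Qed.

End SeparatedAncestors.

Lemma last_common_ancestor n (cyc : nat -> V) : 1 < n ->
  (forall a b, a < n -> b < n -> cyc a = cyc b -> a = b) ->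
  (forall j, j < n -> at_level (cyc j) i) ->
  exists2 t, t < i & (forall j, j < n -> ancestor (cyc j) t = ancestor (cyc 0) t) /\
    exists2 j, j < n & ancestor (cyc j) t.+1 != ancestor (cyc 0) t.+1.
Proof.
move=> n_gt1 cyc_inj cyc_level.
pose P t := [forall j : 'I_n, ancestor (cyc j) t == ancestor (cyc 0) t].
have P0 : P 0 by apply/forallP => j; rewrite !ancestor0 //; apply: cyc_level => //; lia.
have Pi : ~~ P i.
  apply/forallP => /(_ (Ordinal n_gt1)); rewrite !ancestor_id => /eqP /cyc_inj.
  by move/(_ n_gt1 (ltnW n_gt1)).
have [t t_lt /andP [/forallP Pt]] := exists_switch P0 Pi.
rewrite negb_forall => /existsP [j Pj].
exists t => //; split; last by exists j.
by move=> j' j'_lt; apply/eqP: (Pt (Ordinal j'_lt)).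
Qed.

Lemma odd_cycle_of_level_chorded_cycle k n s (cyc : nat -> V) :
  1 <= i <= k -> 2 * k <= n -> 2 <= s -> s + 2 <= n ->
  chorded_cycle_in Ed n s cyc -> (forall j, j < n -> at_level (cyc j) i) ->
  exists phi, cycle_in Ed (2 * k + 1) phi.
Proof.
move=> i_bd n_ge s_ge2 s_le [cyc_inj cyc_adj] cyc_level.
have n_gt1 : 1 < n by lia.
have [t t_lt [common [j0 j0_lt split]]] := last_common_ancestor n_gt1 cyc_inj cyc_level.
pose l := 2 * (k - i + t) + 1.
have l_bd : 1 <= l < n by rewrite /l; lia.
have l_odd : odd l by rewrite /l addn1 /= mul2n odd_double.
pose col j := ancestor (cyc j) t.+1 == ancestor (cyc 0) t.+1.
have col_change : exists2 j, j < n & col j != col 0.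
  by exists j0 => //; rewrite /col eqxx eqb_id.
have [g g_path col_g] := chorded_path_colour_change s_ge2 s_le l_bd l_odd col_change.
have [g_lt g_inj g_adj] := g_path.
rewrite (_ : 2 * k + 1 = 2 * (i - t) + l); last by rewrite /l; lia.
apply: (@cycle_of_separated_ancestors (fun j => cyc (g j))) => //.
- by move=> j j_le; apply/cyc_level/g_lt.
- by move=> j1 j2 j1_le j2_le /cyc_inj eq_g; apply: g_inj; rewrite // eq_g //; apply: g_lt.
- by move=> j j_lt; apply: cyc_adj; [apply/g_lt/ltnW | apply: g_lt | apply: g_adj].
- by rewrite /= !common //; apply: g_lt.
- by apply: (contraNneq _ col_g) => /= eq_anc; rewrite /col eq_anc.
Qed.

End TreeLevels.

Section ChoiceGraph.
Variables (V : finType) (H : {set {set V}}) (pi : {set V} -> {set V}).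
Hypothesis pi_choice : choice_fun H pi.

Local Notation Ed := (Gpi H pi).

Lemma Gpi_card2 e : e \in Ed -> #|e| = 2.
Proof.
case/imsetP => E; rewrite inE => /andP [E_in pi_nz] ->.
by case: (pi_choice E_in) => _ [//|pi0]; rewrite pi0 eqxx in pi_nz.
Qed.

(** Distinct edges of [G_pi] are images of distinct hyperedges. *)
Lemma berge_cycle_of_cycle_in m (phi : nat -> V) : 3 <= m -> cycle_in Ed m phi -> berge_cycle H m.
Proof.
move=> m_ge3 [phi_inj phi_adj].
pose e a := [set phi a; phi ((a + 1) %% m)].
pose hs a := epsilon (inhabits set0) (fun E => E \in H /\ pi E = e a).
have hsP a : a < m -> hs a \in H /\ pi (hs a) = e a.
  move=> a_lt; apply: (epsilon_spec (inhabits set0) (fun E => E \in H /\ pi E = e a)).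
  case/imsetP: (phi_adj a a_lt) => E; rewrite inE => /andP [E_in _] e_eq.
  by exists E; rewrite /e e_eq.
have succ_lt a : (a + 1) %% m < m by rewrite ltn_mod; lia.
have succ_inj a b : a < m -> b < m -> (a + 1) %% m = (b + 1) %% m -> a = b.
  by move=> a_lt b_lt; rewrite !modS_small //; case: ifP; case: ifP; lia.
have no_2cycle a b : a < m -> b < m -> a = (b + 1) %% m -> (a + 1) %% m = b -> False.
  by move=> a_lt b_lt; rewrite !modS_small //; case: ifP; case: ifP; lia.
exists hs, phi; split; [|split; [|split]].
- by move=> a a_lt; case: (hsP a a_lt).
- move=> a b a_lt b_lt a_neq_b; apply/eqP => hs_ab.
  have e_ab : e a = e b by rewrite -(hsP a a_lt).2 -(hsP b b_lt).2 hs_ab.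
  have /set2P [/phi_inj ab | /phi_inj ab1] : phi a \in e b by rewrite -e_ab !inE eqxx.
    by rewrite ab ?eqxx in a_neq_b.
  have /set2P [/phi_inj a1b | /phi_inj a1b1] : phi ((a + 1) %% m) \in e b.
    by rewrite -e_ab !inE eqxx orbT.
  + exact: no_2cycle a_lt b_lt (ab1 a_lt (succ_lt b)) (a1b (succ_lt a) b_lt).
  + by rewrite (succ_inj a b a_lt b_lt (a1b1 (succ_lt a) (succ_lt b))) eqxx in a_neq_b.
- by move=> a b a_lt b_lt; apply: contra_neq; apply: phi_inj.
- move=> a a_lt; have [E_in pi_eq] := hsP a a_lt.
  by rewrite -/(e a) -pi_eq; case: (pi_choice E_in).
Qed.

Definition nbhd (S : {set V}) (v : V) : {set V} := [set u in S | [set v; u] \in Ed].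

Lemma e_induced_delv (S : {set V}) v : v \in S ->
  e_induced Ed S <= e_induced Ed (S :\ v) + #|nbhd S v|.
Proof.
move=> v_in; rewrite /e_induced.
set star := [set [set v; u] | u in nbhd S v].
have sub : [set e in Ed | e \subset S] \subset [set e in Ed | e \subset S :\ v] :|: star.
  apply/subsetP => e; rewrite !inE => /andP [e_in e_sub].
  case: (boolP (v \in e)) => [v_e | v_nin].
  - apply/orP; right.
    have /eqP /cards2P [a [b [_ e_eq]]] := Gpi_card2 e_in.
    move: v_e e_sub e_in; rewrite e_eq !inE => /orP [] /eqP <- e_sub e_in.
    + apply/imsetP; exists b => //; rewrite !inE e_in andbT.
      by apply: (subsetP e_sub); rewrite !inE eqxx orbT.
    + apply/imsetP; exists a; last by rewrite set2C.
      rewrite !inE set2C e_in andbT.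
      by apply: (subsetP e_sub); rewrite !inE eqxx.
  - apply/orP; left; rewrite e_in /=.
    apply/subsetP => y y_e; rewrite !inE (subsetP e_sub _ y_e) andbT.
    by apply: contraNneq v_nin => <-.
apply: leq_trans (subset_leq_card sub) _; apply: leq_trans (leq_card_setU _ _) _.
by rewrite leq_add2l leq_imset_card.
Qed.

(** Deleting vertices of degree at most [d] one at a time keeps the edge
    density above [d], so the process stops at a nonempty subgraph. *)
Lemma min_degree_subgraph d (S : {set V}) : d * #|S| < e_induced Ed S ->
  exists2 S' : {set V}, S' \subset S & S' != set0 /\ forall v, v \in S' -> d < #|nbhd S' v|.
Proof.
move Hn: #|S| => n; elim: n S Hn => [|n IH] S S_card dense.
  move/eqP: S_card; rewrite cards_eq0 => /eqP S0.
  move: dense; rewrite muln0 lt0n cards_eq0 => /set0Pn [e].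
  rewrite inE S0 subset0 => /andP [/Gpi_card2 + /eqP e0].
  by rewrite e0 cards0.
case: (boolP [forall v in S, d < #|nbhd S v|]) => [/forall_inP all_deg | ].
  exists S => //; split => //; apply/set0Pn.
  by apply/card_gt0P; rewrite S_card.
rewrite negb_forall_in => /existsP [v /andP [v_in]]; rewrite -leqNgt => v_deg.
have S'_card : #|S :\ v| = n by move: S_card; rewrite (cardsD1 v S) v_in; lia.
have dense' : d * n < e_induced Ed (S :\ v) by have := e_induced_delv v_in; nia.
case: (IH _ S'_card dense') => S' S'_sub S'_deg.
by exists S' => //; apply: subset_trans S'_sub (subD1set _ _).
Qed.

Lemma uniq_size_le (q : seq V) : uniq q -> size q <= #|V|.
Proof. by move/card_uniqP <-; exact: max_card. Qed.

Lemma maximal_path (S : {set V}) : S != set0 ->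
  exists h r, [/\ uniq (h :: r), all (mem S) (h :: r), path (adj Ed) h r &
    {subset nbhd S h <= h :: r}].
Proof.
case/set0Pn => v0 v0_in.
suff grow m h r : #|V| - size (h :: r) <= m -> uniq (h :: r) ->
    all (mem S) (h :: r) -> path (adj Ed) h r ->
    exists h' r', [/\ uniq (h' :: r'), all (mem S) (h' :: r'), path (adj Ed) h' r' &
      {subset nbhd S h' <= h' :: r'}].
  by apply: (grow #|V| v0 [::]) => //=; [lia | rewrite v0_in].
elim: m h r => [|m IH] h r size_le q_uniq q_S q_path.
  exists h, r; split => // u u_nb; apply: contraT => u_nin.
  have uq_uniq : uniq (u :: h :: r) by rewrite /= u_nin.
  by have := uniq_size_le uq_uniq; rewrite /= in size_le *; lia.
case: (boolP (nbhd S h \subset [set z in h :: r])) => [nb_sub | ].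
  by exists h, r; split => // u /(subsetP nb_sub); rewrite inE.
case/subsetPn => u u_nb; rewrite inE => u_nin.
move: (u_nb); rewrite inE => /andP [u_S hu].
have uq_uniq : uniq (u :: h :: r) by rewrite /= u_nin.
apply: (IH u (h :: r)) => //=.
- by have := uniq_size_le uq_uniq; rewrite /= in size_le *; lia.
- by rewrite u_S.
- by rewrite /adj set2C hu.
Qed.

Lemma chorded_cycle_of_path h r s M : uniq (h :: r) -> path (adj Ed) h r ->
  1 < s < M -> M < size (h :: r) ->
  [set h; nth h (h :: r) s] \in Ed -> [set h; nth h (h :: r) M] \in Ed ->
  chorded_cycle_in Ed M.+1 s (nth h (h :: r)).
Proof.
move=> q_uniq q_path s_bd M_lt hs hM; split.
  by move=> a b a_lt b_lt /eqP; rewrite nth_uniq // => [/eqP | |]; lia.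
have step j : j < M -> [set nth h (h :: r) j; nth h (h :: r) j.+1] \in Ed.
  have /(pathP h) q_adj := q_path.
  by move=> j_lt; apply: q_adj; exact: leq_trans j_lt M_lt.
move=> a b a_lt b_lt ab_adj.
case: ab_adj a_lt b_lt => [->|[->|[[-> ->]|[[-> ->]|[[-> ->]|[-> ->]]]]]] a_lt b_lt.
- by apply: step; lia.
- by rewrite set2C; apply: step; lia.
- by rewrite subn1 set2C.
- by rewrite subn1.
- by [].
- by rewrite set2C.
Qed.

Lemma chord_indices_of_path (S : {set V}) h r D : {subset nbhd S h <= h :: r} ->
  3 <= D -> D <= #|nbhd S h| ->
  exists s M, [/\ 1 < s < M, M < size (h :: r), D <= M,
    nth h (h :: r) s \in nbhd S h & nth h (h :: r) M \in nbhd S h].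
Proof.
set q := h :: r; set N := nbhd S h => nb_sub D_ge3 N_card.
have h_nin : h \notin N.
  by rewrite inE; apply/nandP; right; apply/negP => /Gpi_card2; rewrite setUid cards1.
have N_index u : u \in N -> 0 < index u q < size q.
  move=> u_N; rewrite index_mem nb_sub // andbT lt0n.
  by apply: contraNneq h_nin => idx0; rewrite -{1}[h]/(nth h q 0) -idx0 nth_index ?nb_sub.
have N_nth u : u \in N -> nth h q (index u q) = u by move=> u_N; rewrite nth_index ?nb_sub.
have [u0 u0_N] : exists u0, u0 \in N by apply/set0Pn; rewrite -card_gt0; lia.
case: (arg_maxnP (fun u => index u q) u0_N) => uM uM_N uM_max.
have {}uM_N : uM \in N := uM_N.
set M := index uM q in uM_max.
have D_le_M : D <= M.
  have N_sub : N \subset [seq nth h q j | j <- iota 1 M].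
    apply/subsetP => u u_N; apply/mapP; exists (index u q); last by rewrite N_nth.
    by rewrite mem_iota; have := N_index u u_N; have := uM_max u u_N; lia.
  apply: leq_trans N_card _; apply: leq_trans (subset_leq_card N_sub) _.
  by apply: leq_trans (card_size _) _; rewrite size_map size_iota.
have N_rest : 0 < #|N :\ uM :\ nth h q 1|.
  have := cardsD1 (nth h q 1) (N :\ uM); rewrite (cardsD1 uM N) uM_N in N_card.
  by case: (_ \in _) => /=; lia.
move: N_rest; rewrite card_gt0 => /set0Pn [us]; rewrite !in_setD1 => /and3P [us_1 us_M us_N].
set s := index us q.
have s_ne1 : s != 1 by apply: contra_neq us_1 => s1; rewrite -(N_nth us us_N) -/s s1.
have s_neM : s != M.
  by apply: contra_neq us_M => sM; rewrite -(N_nth us us_N) -(N_nth uM uM_N) -/s sM.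
have s_le := uM_max us us_N.
have := N_index us us_N; have := N_index uM uM_N; rewrite -/s -/M => /andP [M_gt0 M_lt] s_bd.
by exists s, M; split; rewrite ?N_nth //; lia.
Qed.

Lemma chorded_cycle_of_min_degree (S : {set V}) D : 3 <= D -> S != set0 ->
  (forall v, v \in S -> D <= #|nbhd S v|) ->
  exists cyc n s, [/\ D + 1 <= n, 2 <= s, s + 2 <= n,
    forall j, j < n -> cyc j \in S & chorded_cycle_in Ed n s cyc].
Proof.
move=> D_ge3 S_nz S_deg.
have [h [r [q_uniq q_S q_path nb_sub]]] := maximal_path S_nz.
have N_card : D <= #|nbhd S h| by apply: S_deg; case/andP: q_S.
have [s [M [s_bd M_lt D_le /setIdP [_ hs] /setIdP [_ hM]]]] :=
  chord_indices_of_path nb_sub D_ge3 N_card.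
exists (nth h (h :: r)), M.+1, s; split; try lia.
- by move=> j j_lt; apply: (allP q_S); apply: mem_nth; exact: leq_trans j_lt M_lt.
- exact: chorded_cycle_of_path.
Qed.

End ChoiceGraph.

Theorem corollary5p3 (V : finType) (k : nat) (H : {set {set V}})
  (pi : {set V} -> {set V}) (VT : {set V}) (ET : {set {set V}}) (x : V) :
  2 <= k ->
  uniform3 H ->
  linear_hg H ->
  ~ berge_cycle H (2 * k + 1) ->
  choice_fun H pi ->
  subtree (Gpi H pi) VT ET ->
  x \in VT ->
  forall (i : nat) (Vi : {set V}),
    1 <= i <= k ->
    (forall v, v \in Vi <-> (v \in VT /\ dist_eq ET x v i)) ->
    e_induced (Gpi H pi) Vi <= (2 * k - 2) * #|Vi|.
Proof.
move=> k_ge2 _ _ no_berge pi_choice [ET_Ed [ET_VT _]] _ i Vi i_bd Vi_level.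
rewrite leqNgt; apply/negP => /(min_degree_subgraph pi_choice) [S S_sub [S_nz S_deg]].
have D_ge3 : 3 <= 2 * k - 1 by lia.
have S_mindeg v : v \in S -> 2 * k - 1 <= #|nbhd H pi S v| by move/S_deg; lia.
have [cyc [n [s [n_ge s_ge2 s_le cyc_S cyc_chorded]]]] :=
  chorded_cycle_of_min_degree pi_choice D_ge3 S_nz S_mindeg.
have cyc_level j : j < n -> at_level ET VT x (cyc j) i.
  by move=> j_lt; apply/Vi_level/(subsetP S_sub)/cyc_S.
have ET_sub e : e \in ET -> e \subset VT by case/ET_VT.
have n_ge2k : 2 * k <= n by lia.
have [phi phi_cycle] :=
  odd_cycle_of_level_chorded_cycle ET_sub ET_Ed i_bd n_ge2k s_ge2 s_le cyc_chorded cyc_level.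
by apply: no_berge; apply: (berge_cycle_of_cycle_in pi_choice _ phi_cycle); lia.
Qed.
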